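(* For any weight data $A=(a_1,\dots,a_n)$, the weight assignment $Z_A$ is a smooth extremal assignment.
   Context: $[n]=\{1,\dots,n\}$. A stable $n$-labeled tree is a finite tree with $n$ leaves labeled bijectively by $[n]$, all internal vertices of degree $\ge 3$; $V(G)$ its internal vertices; $S(n)$ the set of such trees up to label-preserving isomorphism and $S_2(n)$ those with exactly 2 internal vertices. $G\rightsquigarrow G'$: $G'$ obtained by collapsing connected sets of internal vertices, inducing surjection $\pi:V(G)\to V(G')$; $v\rightsquigarrow v'$ means $\pi(v)=v'$. An extremal assignment of order $n$: rule $Z(G)\subset V(G)$ for $G\in S(n)$ with (a) $Z(G)\ne V(G)$, (b) if $G\rightsquigarrow G'$ and $\pi^{-1}(v')=\{v_1,\dots,v_k\}$ then $v'\in Z(G')\iff v_1,\dots,v_k\in Z(G)$. $Z$ is smooth if for every $G$ and $v\in Z(G)$ there exist $G'\in S_2(n)$, $v'\in Z(G')$ with $G\rightsquigarrow G'$, $v\rightsquigarrow v'$. Weight data: $A=(a_1,\dots,a_n)$ with $a_i\in\mathbb{Q}$, $0<a_i\le 1$, $\sum a_i>2$. A tail of $G$ is a nonempty connected set $T\subset V(G)$ joined to $V(G)\setminus T$ by exactly one edge; $\ell(T)$ is the set of labels of leaves adjacent to vertices of $T$. The weight assignment is $Z_A(G)=\{v\in V(G):\exists$ a tail $T$ of $G$ with $v\in T$ and $\sum_{i\in\ell(T)}a_i\le 1\}$; it is known to be an extremal assignment. *)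

From HB Require Import structures.
From mathcomp Require Import all_boot all_order all_algebra.
Set Implicit Arguments. Unset Strict Implicit. Unset Printing Implicit Defensive.
Import Order.TTheory GRing.Theory Num.Theory.

(* A stable n-labeled tree, given by a concrete representative:
   internal vertices 'I_tm, an adjacency relation tadj among internal
   vertices (the internal subtree), and tleaf i = the internal vertex the
   leaf labeled i is attached to. *)
Record stree (n : nat) := STree {
  tm : nat;
  tadj : rel 'I_tm;
  tleaf : 'I_n -> 'I_tm;
  tm_gt0 : 0 < tm;
  tadj_sym : symmetric tadj;
  tadj_irr : irreflexive tadj;
  tconnected : forall u v : 'I_tm, connect tadj u v;
  (* a connected graph with (#vertices - 1) edges is a tree;
     ordered pairs count each edge twice *)
  tedges : #|[set p : 'I_tm * 'I_tm | tadj p.1 p.2]| = (tm - 1).*2;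
  tstable : forall v : 'I_tm,
      3 <= #|[set w | tadj v w]| + #|[set i | tleaf i == v]|
}.

(* G ~> G' via pi : V(G) -> V(G'): pi surjective, its fibres are connected
   sets of internal vertices of G, and G' is the tree obtained by collapsing
   each fibre to a point. *)
Definition contraction n (G G' : stree n) (pi : 'I_(tm G) -> 'I_(tm G')) : Prop :=
  [/\ forall x : 'I_(tm G'), exists v, pi v = x,
      forall (x : 'I_(tm G')) (u v : 'I_(tm G)), pi u = x -> pi v = x ->
        connect (fun a b => [&& tadj a b, pi a == x & pi b == x]) u v,
      forall x y : 'I_(tm G'),
        tadj x y <-> (x <> y /\ exists u v, [/\ pi u = x, pi v = y & tadj u v])
    & forall i : 'I_n, tleaf G' i = pi (tleaf G i)].

Definition assignment n := forall G : stree n, {set 'I_(tm G)}.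

Definition extremal n (Z : assignment n) : Prop :=
  (forall G : stree n, Z G != [set: 'I_(tm G)]) /\
  (forall (G G' : stree n) (pi : 'I_(tm G) -> 'I_(tm G')),
      contraction pi ->
      forall v' : 'I_(tm G'),
        (v' \in Z G') <-> (forall v, pi v = v' -> v \in Z G)).

Definition smooth n (Z : assignment n) : Prop :=
  forall (G : stree n) (v : 'I_(tm G)), v \in Z G ->
    exists (G' : stree n) (pi : 'I_(tm G) -> 'I_(tm G')),
      [/\ tm G' = 2, contraction pi & pi v \in Z G'].

Definition is_tail n (G : stree n) (T : {set 'I_(tm G)}) : bool :=
  [&& T != set0,
      [forall u in T, forall v in T,
        connect (fun a b => [&& tadj a b, a \in T & b \in T]) u v]
    & #|[set p : 'I_(tm G) * 'I_(tm G) |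
          [&& tadj p.1 p.2, p.1 \in T & p.2 \notin T]]| == 1].

Definition tail_labels n (G : stree n) (T : {set 'I_(tm G)}) : {set 'I_n} :=
  [set i | tleaf G i \in T].

Definition weight_data n (a : 'I_n -> rat) : Prop :=
  (forall i, 0 < a i <= 1)%R /\ (2 < \sum_(i < n) a i)%R.

Definition ZA n (a : 'I_n -> rat) : assignment n :=
  fun G => [set v | [exists T : {set 'I_(tm G)},
      [&& is_tail T, v \in T & (\sum_(i in tail_labels T) a i <= 1)%R] ] ].

From mathcomp Require Import all_boot all_order all_algebra zify.
Import Order.TTheory GRing.Theory Num.Theory.

Set Implicit Arguments.
Unset Strict Implicit.
Unset Printing Implicit Defensive.

(* Removing an edge tw of a tree leaves two components, the branches
   [branch t w] (containing t) and [branch w t]; the tails of a tree are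
   exactly its branches, so Z_A(G) is the union of the light branches (those
   of leaf weight at most 1).  Since the total weight exceeds 2, two light
   branches never cover the tree; hence two light branches that meet are
   nested, and every connected set all of whose vertices lie in light
   branches lies in a single one.
   For a contraction G ~> G', the preimage of a branch of G' is a branch of
   G with the same leaves, which gives one direction of extremality.  For the
   other, a fibre inside Z_A(G) lies in a light branch, and the smallest such
   branch is rooted in the fibre; it is then a union of fibres and maps onto
   a light tail of G'.  Smoothness: collapsing a branch and its complement
   gives a tree with two internal vertices, stable because by a degree count
   every branch carries at least two leaves. *)

Section Connect.
Variable T : finType.
Implicit Types (e : rel T) (P : pred T).

Lemma connect_stable e P x y : P x -> (forall a b, P a -> e a b -> P b) ->
  connect e x y -> P y.
Proof.
move=> Px clP /connectP [p pth ->]; elim: p x Px pth => //= z p IH x Px.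
by case/andP=> exz pz; apply: IH (clP x z Px exz) pz.
Qed.

Lemma connect_sub_in e e' P x y : P x ->
  (forall a b, P a -> e a b -> P b /\ e' a b) ->
  connect e x y -> connect e' x y.
Proof.
move=> Px clP cxy.
suff /andP [] : P y && connect e' x y by [].
apply: (@connect_stable e (fun z => P z && connect e' x z) x y) => //.
  by rewrite Px connect0.
move=> a b /andP [Pa ca] eab; have [Pb e'ab] := clP a b Pa eab.
by rewrite Pb (connect_trans ca (connect1 e'ab)).
Qed.

Lemma connect_exit e (Q : pred T) v z : connect e v z -> Q v -> ~~ Q z ->
  exists b a, [/\ Q b, ~~ Q a, e b a &
     connect (fun x y => [&& e x y, Q x & Q y]) v b].
Proof.
move/connectP=> [p pth ->]; elim: p v pth => [|x p IH] v /= pth Qv nQ.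
  by rewrite Qv in nQ.
case/andP: pth => evx px; case Qx: (Q x); last by exists v, x; rewrite Qx.
have [b [a [Qb nQa eba cxb]]] := IH x px Qx nQ.
exists b, a; split=> //; apply: connect_trans cxb.
by apply: connect1; rewrite evx Qv Qx.
Qed.

Definition edges_in e (R : {set T}) :=
  [set p : T * T | [&& e p.1 p.2, p.1 \in R & p.2 \in R]].

Lemma mem_edges_in e (R : {set T}) p :
  (p \in edges_in e R) = [&& e p.1 p.2, p.1 \in R & p.2 \in R].
Proof. by rewrite inE. Qed.

Lemma edges_inS e (R R' : {set T}) : R \subset R' -> edges_in e R \subset edges_in e R'.
Proof.
move=> sRR'; apply/subsetP=> p; rewrite !inE => /and3P [-> a b].
by rewrite (subsetP sRR' _ a) (subsetP sRR' _ b).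
Qed.

(* A connected set C is grown one vertex at a time from c; each new vertex
   brings at least one new edge, counted twice as an ordered pair. *)
Lemma connected_card_edges_in e (C : {set T}) c : symmetric e -> c \in C ->
  (forall z, z \in C -> connect (fun a b => [&& e a b, a \in C & b \in C]) c z) ->
  (#|C| - 1).*2 <= #|edges_in e C|.
Proof.
move=> esym cC conn.
have grow k : k < #|C| -> exists R : {set T},
    [/\ c \in R, R \subset C, #|R| = k.+1 & k.*2 <= #|edges_in e R|].
  elim: k => [|k IH] hk; first by exists [set c]; rewrite set11 sub1set cC cards1.
  have [R [cR sRC cardR eR]] := IH (ltnW hk).
  have [z zC zR] : exists2 z, z \in C & z \notin R.
    apply/exists_inP; rewrite -negb_forall_in; apply/negP => /forall_inP sCR.
    have /subset_leq_card : C \subset R by apply/subsetP=> x /sCR.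
    by rewrite cardR leqNgt hk.
  have [b [x [bR xR ebx _]]] :=
    connect_exit (Q := fun y => y \in R) (conn z zC) cR zR.
  case/and3P: ebx => ebx bC xC.
  exists (x |: R); split; first by rewrite inE cR orbT.
  - by rewrite subUset sub1set xC sRC.
  - by rewrite cardsU1 xR cardR.
  have sub : (x, b) |: ((b, x) |: edges_in e R) \subset edges_in e (x |: R).
    rewrite !subUset !sub1set !inE /= ebx esym ebx !eqxx bR !orbT /=.
    by apply: edges_inS; apply/subsetP=> y yR; rewrite inE yR orbT.
  apply: leq_trans (subset_leq_card sub).
  have xb : x != b by apply: contraNneq xR => ->.
  rewrite !cardsU1 !inE /= negb_or (negbTE xR) !andbF /=.
  have -> : (x, b) != (b, x) by rewrite xpair_eqE negb_and xb.
  by rewrite doubleS !add1n !ltnS.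
have C0 : 0 < #|C| by apply/card_gt0P; exists c.
have ltC : #|C| - 1 < #|C| by rewrite subn1 prednK.
have [R [_ sRC cardR eR]] := grow _ ltC.
suff CR : C = R by rewrite [in edges_in _ _]CR.
by apply/eqP; rewrite eq_sym eqEcard sRC cardR subn1 prednK // leqnn.
Qed.

End Connect.

Lemma connect_image (T T' : finType) (e : rel T) (e' : rel T') (f : T -> T') x y :
  (forall a b, e a b -> f a = f b \/ e' (f a) (f b)) ->
  connect e x y -> connect e' (f x) (f y).
Proof.
move=> fe; apply: (connect_stable (P := fun z => connect e' (f x) (f z))) => //.
move=> a b ca /fe [<- //| e'ab].
exact: connect_trans ca (connect1 e'ab).
Qed.

Lemma mem_tail_labels n (G : stree n) (A : {set 'I_(tm G)}) i :
  (i \in tail_labels A) = (tleaf G i \in A).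
Proof. by rewrite inE. Qed.

Section Branches.
Variables (n : nat) (G : stree n).
Local Notation V := 'I_(tm G).
Local Notation adj := (@tadj n G).

Definition cut (t w : V) : rel V :=
  fun x y => adj x y && ~~ ((x == t) && (y == w) || (x == w) && (y == t)).

Definition branch (t w : V) : {set V} := [set x | connect (cut t w) t x].

Definition induced (A : {set V}) : rel V := fun x y => [&& adj x y, x \in A & y \in A].

Definition induced_connected (A : {set V}) :=
  forall u v, u \in A -> v \in A -> connect (induced A) u v.

Lemma adj_sym x y : adj x y = adj y x.
Proof. exact: tadj_sym. Qed.

Lemma adj_neq x y : adj x y -> x != y.
Proof. by apply: contraTneq => ->; rewrite tadj_irr. Qed.

Lemma cut_sym t w : symmetric (cut t w).
Proof.
move=> x y; rewrite /cut adj_sym; congr (_ && ~~ _).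
by case: (x == t); case: (y == w); case: (x == w); case: (y == t).
Qed.

Lemma cutC t w : cut t w =2 cut w t.
Proof. by move=> x y; rewrite /cut orbC. Qed.

Lemma cut_adj t w x y : cut t w x y -> adj x y.
Proof. by case/andP. Qed.

Lemma cut_src t w x y : adj x y -> x != t -> x != w -> cut t w x y.
Proof. by rewrite /cut => -> /negbTE -> /negbTE ->. Qed.

Lemma cut_avoid t w x y : adj x y -> x != w -> y != w -> cut t w x y.
Proof. by rewrite /cut => -> /negbTE -> /negbTE ->; rewrite !andbF. Qed.

Lemma induced_sym A : symmetric (induced A).
Proof. by move=> x y; rewrite /induced adj_sym [(x \in A) && _]andbC. Qed.

Lemma branch_root t w : t \in branch t w.
Proof. by rewrite inE connect0. Qed.

Lemma branch_connect t w x y : x \in branch t w -> connect (cut t w) x y ->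
  y \in branch t w.
Proof. by rewrite !inE => cx cy; apply: connect_trans cx cy. Qed.

Lemma branch_step t w x y : x \in branch t w -> cut t w x y -> y \in branch t w.
Proof. by move=> xS exy; apply: branch_connect xS (connect1 exy). Qed.

(* If w were still reachable from t, the graph without the edge tw would be
   connected with fewer than tm G - 1 edges. *)
Lemma notin_branch t w : adj t w -> w \notin branch t w.
Proof.
move=> atw; apply/negP; rewrite inE => ctw.
have conn z : connect (cut t w) t z.
  move: (tconnected t z); apply: connect_sub => x y axy.
  have [exy | ] := boolP (cut t w x y); first exact: connect1.
  rewrite /cut axy negbK => /orP [] /andP [/eqP -> /eqP ->] //.
  by rewrite (sym_connect_sym (@cut_sym t w)).
have connT z : z \in [set: V] ->
    connect (fun a b => [&& cut t w a b, a \in [set: V] & b \in [set: V]]) t z.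
  move=> _; move: (conn z); apply: connect_sub => x y exy.
  by apply: connect1; rewrite /= !in_setT exy.
have := connected_card_edges_in (@cut_sym t w) (in_setT t) connT.
rewrite cardsT card_ord.
have sub : (t, w) |: ((w, t) |: edges_in (cut t w) [set: V])
    \subset [set p : V * V | adj p.1 p.2].
  rewrite !subUset !sub1set !inE /= atw adj_sym atw /=.
  by apply/subsetP=> p; rewrite !inE => /andP [/cut_adj].
have e1 : cut t w t w = false by rewrite /cut !eqxx andbF.
have e2 : cut t w w t = false by rewrite /cut !eqxx orbT andbF.
have e3 : ((t, w) == (w, t)) = false by rewrite xpair_eqE (negbTE (adj_neq atw)).
have := subset_leq_card sub; rewrite (tedges G) !cardsU1 !inE /= e1 e2 e3 /=.
by rewrite !add1n => /leq_trans /[apply]; rewrite ltnNge leqW.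
Qed.

Lemma branch_cover t w x : adj t w -> (x \in branch t w) || (x \in branch w t).
Proof.
move=> atw; apply: (connect_stable (P := fun z => (z \in branch t w) || (z \in branch w t)))
  (tconnected t x); first by rewrite branch_root.
move=> u v /orP [] uS auv.
  have [euv | ] := boolP (cut t w u v); first by rewrite (branch_step uS euv).
  by rewrite /cut auv negbK => /orP [] /andP [_ /eqP ->]; rewrite branch_root ?orbT.
have [euv | ] := boolP (cut w t u v); first by rewrite (branch_step uS euv) orbT.
by rewrite /cut auv negbK => /orP [] /andP [_ /eqP ->]; rewrite branch_root ?orbT.
Qed.

Lemma branch_disjoint t w x : adj t w -> x \in branch t w -> x \notin branch w t.
Proof.
move=> atw; rewrite !inE (eq_connect (cutC w t)) => ctx; apply/negP => cwx.
have /negP := notin_branch atw; apply; rewrite inE.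
by apply: connect_trans ctx _; rewrite (sym_connect_sym (@cut_sym t w)).
Qed.

Lemma branchC t w : adj t w -> branch w t = ~: branch t w.
Proof.
move=> atw; apply/setP => z; rewrite in_setC.
have := branch_cover z atw; case zS: (z \in branch t w) => /=.
  by rewrite (negbTE (branch_disjoint atw zS)).
by move=> ->.
Qed.

Lemma branch_boundary t w x y : adj t w -> x \in branch t w -> adj x y ->
  y \notin branch t w -> (x == t) && (y == w).
Proof.
move=> atw xS axy yS; have [exy | ] := boolP (cut t w x y).
  by rewrite (branch_step xS exy) in yS.
rewrite /cut axy negbK => /orP [] // /andP [/eqP xw _].
by rewrite xw (negbTE (notin_branch atw)) in xS.
Qed.

Lemma branch_induced_connected t w : induced_connected (branch t w).
Proof.
have root z : z \in branch t w -> connect (induced (branch t w)) t z.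
  rewrite inE; apply: (connect_sub_in (P := fun z => z \in branch t w)) (branch_root t w) _.
  move=> a b aS eab; have bS := branch_step aS eab.
  by split=> //; rewrite /induced (cut_adj eab) aS bS.
move=> u v uS vS; apply: connect_trans (root v vS).
by rewrite (sym_connect_sym (@induced_sym _)); apply: root.
Qed.

Lemma branch_tail t w : adj t w -> is_tail (branch t w).
Proof.
move=> atw; apply/and3P; split.
- by apply/set0Pn; exists t; apply: branch_root.
- by apply/forall_inP=> u uS; apply/forall_inP=> v vS; apply: branch_induced_connected.
apply/cards1P; exists (t, w); apply/setP=> [[x y]]; rewrite !inE /=.
have := @branch_boundary t w x y atw; have := notin_branch atw.
rewrite !inE xpair_eqE => wS bd; apply/idP/idP => [/and3P [axy xS yS] | ].
  exact: bd xS axy yS.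
case/andP=> /eqP -> /eqP ->.
by rewrite atw connect0.
Qed.

Lemma tail_branch (T : {set V}) : is_tail T -> exists t w, adj t w /\ T = branch t w.
Proof.
case/and3P=> _ /forall_inP Tconn /cards1P [[t w] Bd].
have : (t, w) \in [set p : V * V | [&& adj p.1 p.2, p.1 \in T & p.2 \notin T]].
  by rewrite Bd set11.
rewrite inE /= => /and3P [atw tT wT].
exists t, w; split=> //; apply/setP=> x; apply/idP/idP => xin.
  rewrite inE; have := forall_inP (Tconn t tT) x xin; apply: connect_sub.
  move=> c d /and3P [acd cT dT]; apply: connect1; rewrite /cut acd /=.
  by apply/negP=> /orP [] /andP [/eqP ec /eqP ed]; [move: dT | move: cT];
    rewrite ?ec ?ed (negbTE wT).
rewrite inE in xin; apply: (connect_stable (P := fun z => z \in T)) xin => // c d cT ecd.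
apply: contraT => dT.
have : (c, d) \in [set p : V * V | [&& adj p.1 p.2, p.1 \in T & p.2 \notin T]].
  by rewrite inE /= cT dT (cut_adj ecd).
rewrite Bd inE xpair_eqE => /andP [/eqP ct /eqP dw].
by move: ecd; rewrite /cut ct dw !eqxx andbF.
Qed.

Lemma branch_subset t w x y : x \notin branch t w -> y \notin branch t w ->
  t \in branch x y -> branch t w \subset branch x y.
Proof.
move=> xS yS tS; apply/subsetP=> z; rewrite inE => cz.
apply: branch_connect tS _.
apply: (connect_sub_in (P := fun z => z \in branch t w)) (branch_root t w) _ cz.
move=> u v uS euv; split; first exact: branch_step uS euv.
by apply: cut_src (cut_adj euv) _ _; [apply: contraNneq xS | apply: contraNneq yS] => <-.
Qed.

Lemma branch_edges_total t w : adj t w ->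
  #|edges_in adj (branch t w)| + #|edges_in adj (branch w t)| + 2 <= (tm G - 1).*2.
Proof.
move=> atw; rewrite -(tedges G).
set Et := edges_in adj (branch t w); set Ew := edges_in adj (branch w t).
have sub : (t, w) |: ((w, t) |: (Et :|: Ew)) \subset [set p : V * V | adj p.1 p.2].
  rewrite !subUset !sub1set !inE /= atw adj_sym atw /=.
  by apply/andP; split; apply/subsetP => p; rewrite !inE => /andP [].
apply: leq_trans (subset_leq_card sub).
have dis : [disjoint Et & Ew].
  apply/pred0P => p /=; rewrite !mem_edges_in.
  apply/negP => /andP [/and3P [_ p1 _] /and3P [_ p1' _]].
  by move: p1'; rewrite (negbTE (branch_disjoint atw p1)).
have wS : (w \in branch t w) = false by apply/negbTE/notin_branch.
have tS : (t \in branch w t) = false by rewrite adj_sym in atw; apply/negbTE/notin_branch.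
have nwt : (w, t) \notin Et :|: Ew by rewrite in_setU !mem_edges_in /= wS tS !andbF.
have ntw : (t, w) \notin (w, t) |: (Et :|: Ew).
  rewrite in_setU1 in_setU !mem_edges_in /= xpair_eqE (negbTE (adj_neq atw)).
  by rewrite wS tS !andbF.
rewrite !cardsU1 ntw nwt cardsU (disjoint_setI0 dis) cards0 subn0; lia.
Qed.

Lemma branch_degree_sum t w : adj t w ->
  \sum_(v in branch t w) #|[set u | adj v u]| <= #|edges_in adj (branch t w)| + 1.
Proof.
move=> atw.
have -> : \sum_(v in branch t w) #|[set u | adj v u]|
    = #|[set p : V * V | (p.1 \in branch t w) && adj p.1 p.2]|.
  rewrite -sum1dep_card.
  rewrite -(pair_big_dep (fun v => v \in branch t w) (fun v u => adj v u) (fun _ _ => 1)).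
  by apply: eq_bigr => v _; rewrite sum1dep_card.
have sub : [set p : V * V | (p.1 \in branch t w) && adj p.1 p.2]
    \subset (t, w) |: edges_in adj (branch t w).
  apply/subsetP => [[x y]]; rewrite inE in_setU1 mem_edges_in /= => /andP [xS axy].
  have [yS | yS] := boolP (y \in branch t w); first by apply/orP; right; apply/and3P.
  by rewrite xpair_eqE (branch_boundary atw xS axy yS).
apply: leq_trans (subset_leq_card sub) _.
by rewrite cardsU1 addnC leq_add2l leq_b1.
Qed.

(* Stability gives 3 |S| <= (degree sum over S) + (leaves in S), and the
   edge counts bound the degree sums of both branches. *)
Lemma branch_leaves t w : adj t w -> 2 <= #|[set i | tleaf G i \in branch t w]|.
Proof.
move=> atw; set L := #|[set i | tleaf G i \in branch t w]|.
have awt : adj w t by rewrite adj_sym.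
have card_split : #|branch t w| + #|branch w t| = tm G.
  by rewrite (branchC atw) cardsC card_ord.
have lbw : (#|branch w t| - 1).*2 <= #|edges_in adj (branch w t)|.
  apply: (connected_card_edges_in (@tadj_sym _ G) (branch_root w t)) => z zS.
  exact: branch_induced_connected (branch_root w t) zS.
have leavesS : \sum_(v in branch t w) #|[set i | tleaf G i == v]| = L.
  rewrite /L -sum1dep_card (partition_big (tleaf G) (mem (branch t w))) //=.
  apply: eq_bigr => v vS; rewrite -sum1dep_card; apply: eq_bigl => i.
  by case: (tleaf G i =P v) => [->|]; rewrite ?vS ?andbF.
have stab : 3 * #|branch t w| <= \sum_(v in branch t w) #|[set u | adj v u]| + L.
  rewrite -leavesS -big_split /= mulnC -sum_nat_const.
  by apply: leq_sum => v _; apply: tstable.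
have S0 : 0 < #|branch t w| by apply/card_gt0P; exists t; apply: branch_root.
have C0 : 0 < #|branch w t| by apply/card_gt0P; exists w; apply: branch_root.
have := branch_edges_total atw; have := branch_degree_sum atw; lia.
Qed.

Section Weights.
Variable a : 'I_n -> rat.

Definition light (A : {set V}) : bool := (\sum_(i in tail_labels A) a i <= 1)%R.

Lemma in_ZA v :
  (v \in ZA a G) <-> exists t w, [/\ adj t w, v \in branch t w & light (branch t w)].
Proof.
split=> [| [t [w [atw vS lS]]]].
  rewrite inE => /existsP [T /and3P [tT vT lT]].
  by have [t [w [atw eT]]] := tail_branch tT; exists t, w; rewrite -eT.
by rewrite inE; apply/existsP; exists (branch t w); rewrite branch_tail ?vS.
Qed.

Hypothesis a_ge0 : forall i, (0 <= a i)%R.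
Hypothesis a_gt2 : (2 < \sum_i a i)%R.

Lemma light_subset (A B : {set V}) : A \subset B -> light B -> light A.
Proof.
move=> sAB; apply: le_trans.
rewrite [X in (X <= _)%R]big_mkcond [X in (_ <= X)%R]big_mkcond /=.
apply: ler_sum => i _; rewrite !mem_tail_labels.
case: ifP => h; first by rewrite (subsetP sAB _ h).
by case: ifP.
Qed.

Lemma light_no_cover (A B : {set V}) : (forall z, (z \in A) || (z \in B)) ->
  light A -> light B -> False.
Proof.
move=> cov lA lB.
have : (\sum_i a i <= \sum_(i in tail_labels A) a i + \sum_(i in tail_labels B) a i)%R.
  rewrite [X in (_ <= X + _)%R]big_mkcond [X in (_ <= _ + X)%R]big_mkcond /=.
  rewrite -big_split /=; apply: ler_sum => i _; rewrite !mem_tail_labels.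
  have := cov (tleaf G i).
  by case: (tleaf G i \in A); case: (tleaf G i \in B); rewrite ?addr0 ?add0r ?lerDl.
move/le_trans/(_ (lerD lA lB)); rewrite -[(1 + 1)%R]/2%R.
by rewrite leNgt a_gt2.
Qed.

Lemma light_branch_grow t w x y : adj t w -> light (branch t w) ->
  adj x y -> light (branch x y) -> w \in branch x y -> branch t w \proper branch x y.
Proof.
move=> atw lt axy lxy wS.
have nocover : (forall z, (z \in branch t w) || (z \in branch x y)) -> False.
  by move/light_no_cover; apply.
case xS: (x \in branch t w); case yS: (y \in branch t w).
- have := branch_subset (branch_disjoint atw xS) (branch_disjoint atw yS) wS.
  move=> /subsetP sub; case: nocover => z.
  by case/orP: (branch_cover z atw) => [-> // | /sub ->]; rewrite orbT.
- have /andP [/eqP ex /eqP ey] := branch_boundary atw xS axy (negbT yS).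
  by move: wS; rewrite ex ey (negbTE (notin_branch atw)).
- rewrite adj_sym in axy.
  have /andP [/eqP ey /eqP ex] := branch_boundary atw yS axy (negbT xS).
  by case: nocover => z; rewrite ex ey; apply: branch_cover.
have tS : t \in branch x y.
  apply: branch_step wS _; rewrite cut_sym; apply: cut_src atw _ _; apply/eqP => tx;
    [move: xS | move: yS]; by rewrite -tx branch_root.
rewrite properE branch_subset ?xS ?yS //=.
by apply/negP=> /subsetP /(_ w wS); rewrite (negbTE (notin_branch atw)).
Qed.

(* Take a light branch of maximal size meeting F; any light branch through a
   vertex of F outside it would strictly contain it. *)
Lemma light_branch_cover (F : {set V}) f0 : f0 \in F -> induced_connected F ->
  (forall z, z \in F -> exists t w, [/\ adj t w, z \in branch t w & light (branch t w)]) ->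
  exists t w, [/\ adj t w, F \subset branch t w & light (branch t w)].
Proof.
move=> f0F Fconn FZ.
pose Q (p : V * V) :=
  [&& adj p.1 p.2, light (branch p.1 p.2) & [exists z in F, z \in branch p.1 p.2]].
have [t0 [w0 [a0 s0 l0]]] := FZ f0 f0F.
have Q0 : Q (t0, w0) by rewrite /Q /= a0 l0 /=; apply/exists_inP; exists f0.
case: (arg_maxnP (fun p => #|branch p.1 p.2|) Q0) => [[t w]] /=.
move=> /and3P [/= atw lt /exists_inP [g gF gS]] maxp.
exists t, w; split=> //; apply/subsetP => f fF; apply/negPn/negP => fS.
have wF : w \in F.
  apply: contraT => wF; move: fS; rewrite (branch_connect gS) //.
  move: (Fconn g f gF fF); apply: connect_sub => u v /and3P [auv uF vF].
  by apply/connect1/cut_avoid => //; apply: contraNneq wF => <-.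
have [x [y [axy wS' ly]]] := FZ w wF.
have : Q (x, y) by rewrite /Q /= axy ly /=; apply/exists_inP; exists w.
move/maxp; rewrite leqNgt => /negP; apply; apply: proper_card.
exact: light_branch_grow.
Qed.

(* The smallest light branch containing F has its root in F: otherwise the
   edge by which a path from the root first enters F gives a smaller one. *)
Lemma light_branch_rooted (F : {set V}) f0 t w : f0 \in F -> induced_connected F ->
  adj t w -> F \subset branch t w -> light (branch t w) ->
  exists p q, [/\ adj p q, p \in F, F \subset branch p q & light (branch p q)].
Proof.
move=> f0F Fconn atw FS0 l0.
pose Q (p : V * V) := [&& adj p.1 p.2, light (branch p.1 p.2) & F \subset branch p.1 p.2].
have Q0 : Q (t, w) by rewrite /Q /= atw l0.
case: (arg_minnP (fun p => #|branch p.1 p.2|) Q0) => [[p q]] /=.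
move=> /and3P [/= apq lpq FS] minp.
exists p, q; split=> //; apply/negPn/negP => pF.
have f0S : connect (cut p q) p f0 by rewrite -inE (subsetP FS).
have nnf0 : ~~ (f0 \notin F) by rewrite negbK.
have [b [x [bF xF ebx cpb]]] := connect_exit (Q := fun z => z \notin F) f0S pF nnf0.
rewrite negbK in xF.
have axb : adj x b by rewrite adj_sym (cut_adj ebx).
have FS' : F \subset branch x b.
  apply/subsetP => f fF; rewrite inE; move: (Fconn x f xF fF); apply: connect_sub.
  move=> u v /and3P [auv uF vF].
  by apply/connect1/cut_avoid => //; apply: contraNneq bF => <-.
have pS : p \in branch b x.
  rewrite inE (sym_connect_sym (@cut_sym b x)).
  move: cpb; apply: connect_sub => u v /and3P [euv uF vF].
  apply/connect1/cut_avoid; first exact: cut_adj euv.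
    by apply: contraNneq uF => ->.
  by apply: contraNneq vF => ->.
have abx : adj b x by rewrite adj_sym.
have qS : q \in branch b x.
  apply: branch_step pS _; rewrite /cut apq /=.
  apply/negP => /orP [/andP [_ /eqP qx] | /andP [/eqP px _]].
    by have := subsetP FS x xF; rewrite -qx (negbTE (notin_branch apq)).
  by move: pF; rewrite px xF.
have sub := branch_subset (branch_disjoint abx pS) (branch_disjoint abx qS) (subsetP FS _ xF).
have : Q (x, b) by rewrite /Q /= axb FS' andbT (light_subset sub).
move/minp; rewrite leqNgt => /negP; apply; apply: proper_card.
rewrite properE sub /=; apply/negP => /subsetP /(_ p (branch_root p q)).
by rewrite (negbTE (branch_disjoint abx pS)).
Qed.

Lemma ZA_proper : ZA a G != [set: V].
Proof.
apply/negP => /eqP ZAT; have f0 : V := Ordinal (tm_gt0 G).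
have [|z _ |t [w [atw sub _]]] := @light_branch_cover [set: V] f0 (in_setT f0).
- move=> u v _ _; move: (tconnected u v); apply: connect_sub => x y axy.
  by apply: connect1; rewrite /induced axy !in_setT.
- by apply/in_ZA; rewrite ZAT in_setT.
by move: (subsetP sub w (in_setT w)); rewrite (negbTE (notin_branch atw)).
Qed.

End Weights.
End Branches.

Section Contraction.
Variables (n : nat) (G G' : stree n) (pi : 'I_(tm G) -> 'I_(tm G')).
Hypothesis pi_contr : contraction pi.
Local Notation V := 'I_(tm G).
Local Notation V' := 'I_(tm G').

Lemma contraction_surj x : exists v, pi v = x.
Proof. by case: pi_contr => surj _ _ _; apply: surj. Qed.

Lemma contraction_fibre_connect (x : V') (e : rel V) u v : pi u = x -> pi v = x ->
  (forall c d, tadj c d -> pi c = x -> pi d = x -> e c d) -> connect e u v.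
Proof.
case: pi_contr => _ fibre _ _ pu pv fe; move: (fibre x u v pu pv); apply: connect_sub.
by move=> c d /and3P [acd /eqP pc /eqP pd]; apply/connect1/fe.
Qed.

Lemma contraction_adj x y :
  tadj x y <-> (x <> y /\ exists u v, [/\ pi u = x, pi v = y & tadj u v]).
Proof. by case: pi_contr => _ _ adjE _; apply: adjE. Qed.

Lemma contraction_leaf i : tleaf G' i = pi (tleaf G i).
Proof. by case: pi_contr => _ _ _ leafE; apply: leafE. Qed.

Lemma adj_image c d : tadj c d -> pi c <> pi d -> tadj (pi c) (pi d).
Proof. by move=> acd ne; apply/contraction_adj; split=> //; exists c, d. Qed.

Lemma fibre_connect_cut x y u v : pi x <> pi y -> pi u = pi v -> connect (cut x y) u v.
Proof.
move=> nxy puv; apply: (contraction_fibre_connect (erefl (pi u)) (esym puv)).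
move=> c d acd pc pd; rewrite /cut acd /=.
by apply/negP => /orP [] /andP [/eqP ec /eqP ed]; apply: nxy; rewrite -ec -ed pc pd.
Qed.

Lemma edge_lift_unique x y c d : tadj x y -> pi x <> pi y ->
  pi c = pi x -> pi d = pi y -> ~ cut x y c d.
Proof.
move=> axy nxy pc pd ecd; apply: (negP (notin_branch axy)); rewrite inE.
apply: connect_trans (fibre_connect_cut nxy (esym pc)) _.
exact: connect_trans (connect1 ecd) (fibre_connect_cut nxy pd).
Qed.

Lemma tail_preimage (T' : {set V'}) : is_tail T' ->
  exists x y, tadj x y /\ forall z, (z \in branch x y) = (pi z \in T').
Proof.
case/and3P => _ _ /cards1P [[t' w'] Bd].
have [atw tT wT] : [/\ tadj t' w', t' \in T' & w' \notin T'].
  by apply/and3P; have := set11 (t', w'); rewrite -Bd inE.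
have bd c d : tadj c d -> pi c \in T' -> pi d \notin T' -> pi c = t' /\ pi d = w'.
  move=> acd cT dT; have ne : pi c <> pi d by move=> e; move: dT; rewrite -e cT.
  have : (pi c, pi d) \in [set (t', w')] by rewrite -Bd inE /= cT dT adj_image.
  by rewrite inE xpair_eqE => /andP [/eqP -> /eqP ->].
have [_ [x [y [px py axy]]]] := proj1 (contraction_adj t' w') atw.
have nxy : pi x <> pi y by rewrite px py => e; move: tT; rewrite e (negbTE wT).
have inT z : z \in branch x y -> pi z \in T'.
  rewrite inE; apply: (connect_stable (P := fun z => pi z \in T')); first by rewrite px.
  move=> c d cT ecd; apply/negPn/negP => dT.
  have [pc pd] := bd c d (cut_adj ecd) cT dT.
  by apply: (edge_lift_unique axy nxy _ _ ecd); rewrite ?pc ?pd.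
have outT z : z \in branch y x -> pi z \notin T'.
  rewrite inE; apply: (connect_stable (P := fun z => pi z \notin T')); first by rewrite py.
  move=> c d cT ecd; apply/negP => dT.
  rewrite cut_sym cutC in ecd; have [pd pc] := bd d c (cut_adj ecd) dT cT.
  by apply: (edge_lift_unique axy nxy _ _ ecd); rewrite ?pc ?pd.
exists x, y; split=> // z; have [zS | zS] := boolP (z \in branch x y); first by rewrite inT.
by rewrite (negbTE (outT z _)) // (branchC axy) in_setC.
Qed.

Lemma branch_saturated p q z z' : tadj p q -> pi p <> pi q ->
  z \in branch p q -> pi z = pi z' -> z' \in branch p q.
Proof. by move=> _ npq zS e; apply: branch_connect zS (fibre_connect_cut npq e). Qed.

Lemma mem_branch_image p q z : tadj p q -> pi p <> pi q ->
  (pi z \in pi @: branch p q) = (z \in branch p q).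
Proof.
move=> apq npq; apply/imsetP/idP => [[z' z'S e] | zS]; last by exists z.
exact: branch_saturated apq npq z'S (esym e).
Qed.

Lemma branch_image_tail p q : tadj p q -> pi p <> pi q -> is_tail (pi @: branch p q).
Proof.
move=> apq npq; have memT z := mem_branch_image z apq npq.
apply/and3P; split.
- by apply/set0Pn; exists (pi p); rewrite memT branch_root.
- apply/forall_inP => u' uT; apply/forall_inP => v' vT.
  have [u pu] := contraction_surj u'; have [v pv] := contraction_surj v'.
  rewrite -pu -pv; rewrite -pu memT in uT; rewrite -pv memT in vT.
  apply: connect_image (branch_induced_connected uT vT) => c d /and3P [acd cS dS].
  case: (pi c =P pi d) => [-> | ne]; [by left | right].
  by rewrite /= adj_image // !memT cS dS.
apply/cards1P; exists (pi p, pi q); apply/setP => [[x' y']]; rewrite inE in_set1 /=.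
apply/idP/idP => [/and3P [axy xT yT] | /eqP [-> ->]].
  have [_ [c [d [pc pd acd]]]] := proj1 (contraction_adj x' y') axy.
  rewrite -pc memT in xT; rewrite -pd memT in yT.
  by rewrite -pc -pd; have /andP [/eqP -> /eqP ->] := branch_boundary apq xT acd yT.
by rewrite adj_image // !memT branch_root (notin_branch apq).
Qed.

Variable a : 'I_n -> rat.

Lemma ZA_pullback v : pi v \in ZA a G' -> v \in ZA a G.
Proof.
rewrite inE => /existsP [T' /and3P [tailT vT lightT]].
have [x [y [axy memS]]] := tail_preimage tailT.
apply/in_ZA; exists x, y; rewrite memS /light; split=> //.
suff -> : tail_labels (branch x y) = tail_labels T' by [].
by apply/setP => i; rewrite !mem_tail_labels memS contraction_leaf.
Qed.

Hypothesis a_ge0 : forall i, (0 <= a i)%R.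
Hypothesis a_gt2 : (2 < \sum_i a i)%R.

Lemma ZA_pushforward v' : (forall v, pi v = v' -> v \in ZA a G) -> v' \in ZA a G'.
Proof.
move=> fibreZ; pose F := [set z | pi z == v'].
have [f0 pf0] := contraction_surj v'.
have f0F : f0 \in F by rewrite inE pf0.
have Fconn : induced_connected F.
  move=> u v; rewrite !inE => /eqP pu /eqP pv; apply: (contraction_fibre_connect pu pv).
  by move=> c d acd pc pd; rewrite /induced acd !inE pc pd eqxx.
have FZ z : z \in F -> exists t w, [/\ tadj t w, z \in branch t w & light a (branch t w)].
  by rewrite inE => /eqP pz; apply/in_ZA/fibreZ.
have [t [w [atw FS lS]]] := light_branch_cover a_ge0 a_gt2 f0F Fconn FZ.
have [p [q [apq pF FS' lpq]]] := light_branch_rooted a_ge0 f0F Fconn atw FS lS.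
have pp : pi p = v' by apply/eqP; rewrite inE in pF.
have npq : pi p <> pi q.
  move=> e; have /(subsetP FS') : q \in F by rewrite inE -e pp.
  by rewrite (negbTE (notin_branch apq)).
rewrite inE; apply/existsP; exists (pi @: branch p q).
rewrite branch_image_tail // -pp mem_branch_image // branch_root /=.
suff -> : tail_labels (pi @: branch p q) = tail_labels (branch p q) by [].
by apply/setP => i; rewrite !mem_tail_labels contraction_leaf mem_branch_image.
Qed.

End Contraction.

Lemma ord2_cases (x : 'I_2) : x = ord0 \/ x = ord_max.
Proof. by case: x => [[|[|m]]] lt2; [left | right |]; try apply: val_inj. Qed.

Section Collapse.
Variables (n : nat) (G : stree n) (t w : 'I_(tm G)).
Hypothesis atw : tadj t w.
Local Notation V := 'I_(tm G).

Definition collapse_map (z : V) : 'I_2 := if z \in branch t w then ord0 else ord_max.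

Definition adj2 : rel 'I_2 := fun x y => x != y.

Lemma collapse_map0 z : (collapse_map z == ord0) = (z \in branch t w).
Proof. by rewrite /collapse_map; case: (z \in branch t w). Qed.

Lemma collapse_map1 z : (collapse_map z == ord_max) = (z \in branch w t).
Proof. by rewrite (branchC atw) in_setC /collapse_map; case: (z \in branch t w). Qed.

Lemma adj2_sym : symmetric adj2.
Proof. by move=> x y; rewrite /adj2 eq_sym. Qed.

Lemma adj2_irr : irreflexive adj2.
Proof. by move=> x; rewrite /adj2 eqxx. Qed.

Lemma adj2_connected (u v : 'I_2) : connect adj2 u v.
Proof. by case: (eqVneq u v) => [-> | uv]; [apply: connect0 | apply: connect1]. Qed.

Lemma adj2_edges : #|[set p : 'I_2 * 'I_2 | adj2 p.1 p.2]| = (2 - 1).*2.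
Proof.
suff -> : [set p : 'I_2 * 'I_2 | adj2 p.1 p.2] = [set (ord0, ord_max); (ord_max, ord0)].
  by rewrite cards2.
apply/setP => [[x y]]; rewrite !inE /adj2 /=.
by case: (ord2_cases x) => ->; case: (ord2_cases y) => ->.
Qed.

Lemma collapse_stable (v : 'I_2) :
  3 <= #|[set u | adj2 v u]| + #|[set i | collapse_map (tleaf G i) == v]|.
Proof.
have -> : #|[set u | adj2 v u]| = 1.
  suff -> : [set u | adj2 v u] = [set~ v] by rewrite cardsC1 card_ord.
  by apply/setP => x; rewrite !inE /adj2 eq_sym.
rewrite add1n ltnS; case: (ord2_cases v) => ->.
  rewrite (@eq_finset _ _ (fun i => tleaf G i \in branch t w)); first exact: branch_leaves.
  by move=> i; rewrite /= collapse_map0.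
rewrite (@eq_finset _ _ (fun i => tleaf G i \in branch w t)).
  by apply: branch_leaves; rewrite adj_sym.
by move=> i; rewrite /= collapse_map1.
Qed.

Definition collapse : stree n :=
  @STree n 2 adj2 (fun i => collapse_map (tleaf G i)) isT adj2_sym adj2_irr
    adj2_connected adj2_edges collapse_stable.

Lemma collapse_contraction : contraction (G' := collapse) collapse_map.
Proof.
split=> //.
- move=> x; case: (ord2_cases x) => ->; [exists t | exists w]; apply/eqP.
    by rewrite collapse_map0 branch_root.
  by rewrite collapse_map1 branch_root.
- move=> x u v pu pv.
  suff [u' [v' side]] : exists u' v', forall z, (collapse_map z == x) = (z \in branch u' v').
    have uS : u \in branch u' v' by rewrite -side pu.
    have vS : v \in branch u' v' by rewrite -side pv.
    move: (branch_induced_connected uS vS); apply: connect_sub => c d /and3P [acd cS dS].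
    by apply: connect1; rewrite /= acd !side cS dS.
  case: (ord2_cases x) => ->; [exists t, w | exists w, t].
    exact: collapse_map0.
  exact: collapse_map1.
- move=> x y; split=> [xy | [xy _]]; last exact/eqP.
  split; first exact/eqP.
  move: xy; case: (ord2_cases x) => ->; case: (ord2_cases y) => ->;
    rewrite /adj2 ?eqxx // => _; [exists t, w | exists w, t].
    by split=> //; apply/eqP; rewrite ?collapse_map0 ?collapse_map1 branch_root.
  by split; rewrite 1?adj_sym //; apply/eqP; rewrite ?collapse_map0 ?collapse_map1 branch_root.
Qed.

Lemma collapse_ZA a v : v \in branch t w -> light a (branch t w) ->
  collapse_map v \in ZA a collapse.
Proof.
move=> vS lS; have -> : collapse_map v = ord0 by apply/eqP; rewrite collapse_map0.
have a01 : tadj (s := collapse) ord0 ord_max by [].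
have mem0 x : (x \in branch (G := collapse) ord0 ord_max) = (x == ord0).
  by case: (ord2_cases x) => ->; rewrite ?branch_root // (negbTE (notin_branch a01)).
apply/in_ZA; exists ord0, ord_max; split; rewrite ?branch_root // /light.
suff -> : tail_labels (branch (G := collapse) ord0 ord_max) = tail_labels (branch t w) by [].
by apply/setP => i; rewrite !mem_tail_labels mem0 collapse_map0.
Qed.

End Collapse.

Theorem lemma7p3 (n : nat) (a : 'I_n -> rat) :
  weight_data a -> extremal (ZA a) /\ smooth (ZA a).
Proof.
case=> a_bounds a_gt2.
have a_ge0 i : (0 <= a i)%R by case/andP: (a_bounds i) => /ltW.
split; [split|].
- by move=> G; apply: ZA_proper a_ge0 a_gt2.
- move=> G G' pi pi_contr v'; split=> [v'Z v pv | ]; last exact: ZA_pushforward.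
  by apply: (ZA_pullback pi_contr); rewrite pv.
move=> G v /in_ZA [t [w [atw vS lS]]].
exists (collapse atw), (collapse_map t w); split=> //.
  exact: collapse_contraction.
exact: collapse_ZA.
Qed.
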